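(* Let $\langle M,\mathsf{S}\rangle$ be a sum structure with $M\neq\emptyset$. Then the relation $\sqsubseteq_{\mathsf{S}}$ satisfies the parthood axioms (P1)–(P5), i.e. $\langle M,\sqsubseteq_{\mathsf{S}}\rangle$ is a mereological structure.
   Context: For a set $M$ and a relation $\mathsf{S}\subseteq M\times\mathcal{P}(M)$ define: $x\sqsubseteq_{\mathsf{S}} y$ iff there is $X\subseteq M$ with $y\,\mathsf{S}\,X$ and $x\in X$; $\mathrm{I}(x)=\{y\in M\mid y\sqsubseteq_{\mathsf{S}} x\}$ and for $A\subseteq M$, $\mathrm{I}(A)=\bigcup_{a\in A}\mathrm{I}(a)$; $x$ s-overlaps $y$ iff there are $X,Y\subseteq M$ with $x\,\mathsf{S}\,X$, $y\,\mathsf{S}\,Y$, $X\cap Y\neq\emptyset$; a set $A\subseteq M$ is pre-dense in $B\subseteq M$ iff for every $b\in B$ there is $a\in A$ such that $a$ s-overlaps $b$. A sum structure is a pair $\langle M,\mathsf{S}\rangle$ satisfying: (S1) for every non-empty $X\subseteq M$ there is $x\in M$ with $x\,\mathsf{S}\,X$; (S2) $x\,\mathsf{S}\,X\wedge y\,\mathsf{S}\,X\to x=y$; (S3) $x\,\mathsf{S}\,X\wedge y\,\mathsf{S}\,Y\wedge x\in Y\to y\,\mathsf{S}\,(X\cup Y)$; (S4) if $x\,\mathsf{S}\,X$, $x\,\mathsf{S}\,Y$ and $y\in Y$, then there are $z\in X$ and $Z,U\subseteq M$ with $z\,\mathsf{S}\,Z$, $y\,\mathsf{S}\,U$ and $Z\cap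 U\neq\emptyset$; (S5) for all $x\in M$ and $X\subseteq M$: if $X$ is pre-dense in $\mathrm{I}(x)$ then $x\,\mathsf{S}\,(\mathrm{I}(x)\cap\mathrm{I}(X))$. A mereological structure is a pair $\langle M,\sqsubseteq\rangle$ where $M$ is a non-empty set and $\sqsubseteq\subseteq M\times M$ satisfies, for all $x,y,z\in M$: (P1) $x\sqsubseteq x$; (P2) $x\sqsubseteq y\wedge y\sqsubseteq x\to x=y$; (P3) $x\sqsubseteq y\wedge y\sqsubseteq z\to x\sqsubseteq z$; (P4) if $x\not\sqsubseteq y$ then there is $z\in M$ with $z\sqsubseteq x$ such that there is no $u\in M$ with $u\sqsubseteq z$ and $u\sqsubseteq y$; (P5) for every non-empty $X\subseteq M$ there is $x\in M$ such that every $y\in X$ satisfies $y\sqsubseteq x$, and for every $a\in M$ with $a\sqsubseteq x$ there exist $y\in X$ and $z\in M$ with $z\sqsubseteq y$ and $z\sqsubseteq a$. *)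

Set Implicit Arguments.

Section SumStr.
Variable M : Type.
Variable S : M -> (M -> Prop) -> Prop.

Definition sle (x y : M) : Prop := exists X : M -> Prop, S y X /\ X x.

Definition I1 (x : M) : M -> Prop := fun y => sle y x.

Definition IA (A : M -> Prop) : M -> Prop := fun y => exists a, A a /\ I1 a y.

Definition s_overlaps (x y : M) : Prop :=
  exists X Y : M -> Prop, S x X /\ S y Y /\ exists z, X z /\ Y z.

Definition pre_dense (A B : M -> Prop) : Prop :=
  forall b, B b -> exists a, A a /\ s_overlaps a b.

End SumStr.

Definition sum_structure (M : Type) (S : M -> (M -> Prop) -> Prop) : Prop :=
  (forall X : M -> Prop, (exists z, X z) -> exists x, S x X) /\
  (forall x y X, S x X -> S y X -> x = y) /\
  (forall x y X Y, S x X -> S y Y -> Y x -> S y (fun z => X z \/ Y z)) /\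
  (forall x X Y y, S x X -> S x Y -> Y y ->
              exists z, X z /\ exists Z U : M -> Prop, S z Z /\ S y U /\ exists w, Z w /\ U w) /\
  (forall x (X : M -> Prop), pre_dense S X (I1 S x) ->
              S x (fun z => I1 S x z /\ IA S X z)).

Definition mereological_structure (M : Type) (P : M -> M -> Prop) : Prop :=
  inhabited M /\
  (forall x, P x x) /\
  (forall x y, P x y -> P y x -> x = y) /\
  (forall x y z, P x y -> P y z -> P x z) /\
  (forall x y, ~ P x y -> exists z, P z x /\ ~ exists u, P u z /\ P u y) /\
  (forall X : M -> Prop, (exists z, X z) ->
              exists x, (forall y, X y -> P y x) /\
                (forall a, P a x -> exists y z, X y /\ P z y /\ P z a)).

(* Write x ⊑ y for sle S x y and I(x) for its down-set.  The proof rests on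
   four facts about a sum structure:
   - transitivity of ⊑ is axiom (S3);
   - (S4) says that every set X summing to e is pre-dense in I(e);
   - self-sum: every x is the sum of I(x) — (S5) applied to X = {x};
   - absorption: if y ⊑ e and {y} is pre-dense in I(e), then e = y, since
     (S5) makes e the sum of I(y), which y sums as well, and sums are unique.
   With self-sums, s-overlap coincides with having a common part.  Then
   (P1) is absorption for the sum of {x}; (P2) is uniqueness of sums of
   I(x) = I(y); (P4) is absorption for the sum of {x, y}, where {y} is
   pre-dense because every part of x overlaps y; (P5) is witnessed by the
   S-sum of X, using pre-density once more. *)

From Stdlib Require Import FunctionalExtensionality PropExtensionality Classical.

Set Implicit Arguments.

Section SumStructureFacts.
Variable M : Type.
Variable S : M -> (M -> Prop) -> Prop.

Hypothesis S2 : forall x y X, S x X -> S y X -> x = y.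
Hypothesis S3 : forall x y X Y, S x X -> S y Y -> Y x -> S y (fun z => X z \/ Y z).
Hypothesis S4 : forall x X Y y, S x X -> S x Y -> Y y ->
  exists z, X z /\ exists Z U : M -> Prop, S z Z /\ S y U /\ exists w, Z w /\ U w.
Hypothesis S5 : forall x (X : M -> Prop), pre_dense S X (I1 S x) ->
  S x (fun z => I1 S x z /\ IA S X z).

Notation "x ⊑ y" := (sle S x y) (at level 70).

Lemma S_ext x X Y : S x X -> (forall z, X z <-> Y z) -> S x Y.
Proof.
  intros HX E. replace Y with X; auto.
  apply functional_extensionality; intro z; apply propositional_extensionality; auto.
Qed.

Lemma sle_of_sum x X y : S x X -> X y -> y ⊑ x.
Proof. intros HX Hy; exists X; auto. Qed.
Arguments sle_of_sum {x X y}.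

(* (P3): joining the sets witnessing x ⊑ y and y ⊑ z by (S3). *)
Lemma sle_trans x y z : x ⊑ y -> y ⊑ z -> x ⊑ z.
Proof.
  intros [X [HX Hx]] [Y [HY Hy]].
  exists (fun w => X w \/ Y w); split; auto. eapply S3; eauto.
Qed.

Lemma sum_pre_dense e X : S e X -> pre_dense S X (I1 S e).
Proof.
  intros He b [B [HB Hb]].
  destruct (@S4 e X B b He HB Hb) as [z [Hz [Z [U [HZ [HU Hw]]]]]].
  exists z; split; auto. exists Z, U; auto.
Qed.

Lemma sum_of_down_set x y :
  pre_dense S (fun z => z = y) (I1 S x) -> (forall z, z ⊑ y -> z ⊑ x) ->
  S x (I1 S y).
Proof.
  intros PD Hsub.
  apply S_ext with (1 := @S5 x _ PD); intro z; split.
  - intros [_ [a [Ha Hz]]]; subst a; exact Hz.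
  - intro Hz; split; [apply Hsub; exact Hz | exists y; auto].
Qed.

Section WithSums.
Hypothesis S1 : forall X : M -> Prop, (exists z, X z) -> exists x, S x X.

(* Self-sum: every x is the sum of its down-set.  {x} is pre-dense in I(x)
   because each part of x is a part of the sum of {x}. *)
Lemma self_sum x : S x (I1 S x).
Proof.
  destruct (S1 (fun z => z = x)) as [c Hc]; [eauto|].
  apply sum_of_down_set; auto.
  intros b Hb. apply (sum_pre_dense Hc).
  apply sle_trans with x; [exact Hb | exact (sle_of_sum Hc eq_refl)].
Qed.

Lemma absorb e y : y ⊑ e -> pre_dense S (fun z => z = y) (I1 S e) -> e = y.
Proof.
  intros Hye PD. apply S2 with (I1 S y); [|apply self_sum].
  apply sum_of_down_set; auto.
  intros z Hz; apply sle_trans with y; auto.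
Qed.

Lemma s_overlaps_iff a b : s_overlaps S a b <-> exists u, u ⊑ a /\ u ⊑ b.
Proof.
  split.
  - intros [A [B [HA [HB [u [Au Bu]]]]]]. exists u; split; [exists A | exists B]; auto.
  - intros [u [ua ub]]. exists (I1 S a), (I1 S b).
    split; [apply self_sum|]. split; [apply self_sum|]. exists u; auto.
Qed.

(* (P1): the sum c of {x} absorbs x, so x ⊑ c = x. *)
Lemma sle_refl x : x ⊑ x.
Proof.
  destruct (S1 (fun z => z = x)) as [c Hc]; [eauto|].
  assert (Hxc : x ⊑ c) by exact (sle_of_sum Hc eq_refl).
  rewrite <- (absorb Hxc (sum_pre_dense Hc)) at 2. exact Hxc.
Qed.

(* (P2): mutual parts have the same down-set, hence the same sum. *)
Lemma sle_antisym x y : x ⊑ y -> y ⊑ x -> x = y.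
Proof.
  intros Hxy Hyx. apply S2 with (I1 S x); [apply self_sum|].
  apply S_ext with (1 := self_sum y); intro z; split; intro Hz;
    eapply sle_trans; eauto.
Qed.

(* (P4), strong supplementation.  If every part of x shares a part with y,
   then every part of the sum e of {x, y} overlaps y, so e absorbs y and
   x ⊑ e = y. *)
Lemma sle_supplementation x y :
  ~ x ⊑ y -> exists z, z ⊑ x /\ ~ exists u, u ⊑ z /\ u ⊑ y.
Proof.
  intros Hn. apply NNPP; intro Hno. apply Hn.
  assert (Hall : forall z, z ⊑ x -> exists u, u ⊑ z /\ u ⊑ y).
  { intros z Hz. apply NNPP; intro H. apply Hno. exists z; auto. }
  destruct (S1 (fun z => z = x \/ z = y)) as [e He]; [eauto|].
  assert (PD : pre_dense S (fun z => z = y) (I1 S e)).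
  { intros b Hb. exists y; split; auto.
    destruct (sum_pre_dense He Hb) as [z [[Hz|Hz] Hov]]; subst z; auto.
    apply s_overlaps_iff in Hov as [w [wx wb]].
    destruct (Hall w wx) as [u [uw uy]].
    apply s_overlaps_iff. exists u; split; eauto using sle_trans. }
  rewrite <- (absorb (sle_of_sum He (or_intror eq_refl)) PD).
  exact (sle_of_sum He (or_introl eq_refl)).
Qed.

Lemma sle_sum X : (exists z, X z) ->
  exists x, (forall y, X y -> y ⊑ x) /\
    (forall a, a ⊑ x -> exists y z, X y /\ z ⊑ y /\ z ⊑ a).
Proof.
  intros HX. destruct (S1 X HX) as [x Hx].
  exists x; split.
  - intros y Hy; exact (sle_of_sum Hx Hy).
  - intros a Ha. destruct (sum_pre_dense Hx Ha) as [y [Hy Hov]].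
    apply s_overlaps_iff in Hov as [z [zy za]]. exists y, z; auto.
Qed.

End WithSums.
End SumStructureFacts.

Theorem theorem3p13 (M : Type) (S : M -> (M -> Prop) -> Prop) :
  inhabited M -> sum_structure S -> mereological_structure (sle S).
Proof.
  intros HM (S1 & S2 & S3 & S4 & S5).
  split; [exact HM|].
  split; [exact (sle_refl S2 S3 S4 S5 S1)|].
  split; [exact (sle_antisym S2 S3 S4 S5 S1)|].
  split; [exact (sle_trans S3)|].
  split; [exact (sle_supplementation S2 S3 S4 S5 S1)|].
  exact (sle_sum S3 S4 S5 S1).
Qed.
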